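(* Let $f(x)=\frac1n\sum_{i=1}^n f_i(x)$ on $\mathbb{R}^d$, where each $f_i$ is convex and $L$-smooth, and let $\mathcal X^\star$ (assumed nonempty) be the set of minimizers of $f$. Consider the following algorithm (Acc-SVRG-G) with parameters $\tau_k\in(0,1)$, $p_k\in(0,1]$: set $z_0=\tilde x_0=x_0$, $\alpha_k=\frac{L\tau_k}{1-\tau_k}$, and for $k=0,1,\dots$: $y_k=\tau_kz_k+(1-\tau_k)\big(\tilde x_k-\frac1L\nabla f(\tilde x_k)\big)$; $z_{k+1}=\arg\min_x\{\langle\mathcal G_k,x\rangle+\frac{\alpha_k}{2}\|x-z_k\|^2\}$, where $\mathcal G_k=\nabla f_{i_k}(y_k)-\nabla f_{i_k}(\tilde x_k)+\nabla f(\tilde x_k)$ with $i_k$ sampled uniformly from $\{1,\dots,n\}$ independently of the past; $\tilde x_{k+1}=y_k$ with probability $p_k$ and $\tilde x_{k+1}=\tilde x_k$ with probability $1-p_k$. Then for every $k\ge0$ and every $x^\star\in\mathcal X^\star$, $$\frac{1-\tau_k}{\tau_k^2p_k}\mathbb E[f(\tilde x_{k+1})-f(x^\star)]+\frac L2\mathbb E\|z_{k+1}-x^\star\|^2+\frac{(1-\tau_k)^2}{2L\tau_k^2}\mathbb E\|\nabla f(\tilde x_k)\|^2\le\frac{(1-\tau_kp_k)(1-\tau_k)}{\tau_k^2p_k}\mathbb E[f(\tilde x_k)-f(x^\star)]+\frac L2\mathbb E\|z_k-x^\star\|^2,$$ where $\mathbb E$ is the total expectation.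
   Context: $L$-smooth means $\|\nabla f_i(x)-\nabla f_i(y)\|\le L\|x-y\|$ for all $x,y$; norms are Euclidean. *)

From HB Require Import structures.
From mathcomp Require Import all_boot all_order all_algebra.
From mathcomp Require Import all_classical all_reals all_analysis.
Set Implicit Arguments. Unset Strict Implicit. Unset Printing Implicit Defensive.
Import Order.TTheory GRing.Theory Num.Theory.
Import numFieldNormedType.Exports.
Local Open Scope ring_scope.

Section Defs.
Variables (R : realType) (d : nat).
Notation vec := 'rV[R]_d.

Definition dotv (u v : vec) : R := \sum_(i < d) u 0 i * v 0 i.
Definition sqnorm (v : vec) : R := dotv v v.
Definition enorm (v : vec) : R := Num.sqrt (sqnorm v).

Definition is_gradient (f : vec -> R) (g : vec -> vec) : Prop :=
  forall x, differentiable f x /\ forall v, ('d f x : vec -> R) v = dotv (g x) v.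

Definition convex_fun (f : vec -> R) : Prop :=
  forall (x y : vec) (t : R), 0 <= t <= 1 ->
    f (t *: x + (1 - t) *: y) <= t * f x + (1 - t) * f y.

Definition L_smooth_grad (L : R) (g : vec -> vec) : Prop :=
  forall x y, enorm (g x - g y) <= L * enorm (x - y).

Variables (n : nat) (L : R) (tau p : nat -> R) (g : 'I_n -> vec -> vec).

Definition fullgrad (x : vec) : vec := n%:R^-1 *: \sum_(i < n) g i x.

(* one step k: state = (xtilde_k, z_k); random choice c = (i_k, coin_k),
   coin_k = true means xtilde_{k+1} = y_k (probability p_k). *)
Definition acc_step (k : nat) (s : vec * vec) (c : 'I_n * bool) : vec * vec :=
  let xt := s.1 in let z := s.2 in
  let y := tau k *: z + (1 - tau k) *: (xt - L^-1 *: fullgrad xt) in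
  let G := g c.1 y - g c.1 xt + fullgrad xt in
  let alpha := L * tau k / (1 - tau k) in
  (* z_{k+1} = argmin_x <G,x> + alpha/2 ||x - z||^2 = z - G/alpha *)
  let z' := z - alpha^-1 *: G in
  let xt' := if c.2 then y else xt in
  (xt', z').

Fixpoint acc_run (k : nat) (cs : seq ('I_n * bool)) (s : vec * vec) : vec * vec :=
  if cs is c :: cs' then acc_run k.+1 cs' (acc_step k s c) else s.

(* (xtilde_j, z_j) as a function of the sample path t of length K >= j *)
Definition acc_state (x0 : vec) (K j : nat) (t : K.-tuple ('I_n * bool)) :=
  acc_run 0 (take j t) (x0, x0).

(* probability of a sample path of length K: i_j uniform on 'I_n,
   coin_j Bernoulli(p_j), all mutually independent *)
Definition path_prob (K : nat) (t : K.-tuple ('I_n * bool)) : R :=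
  \prod_(j < K) (n%:R^-1 * (if (tnth t j).2 then p j else 1 - p j)).

Definition Expect (K : nat) (F : K.-tuple ('I_n * bool) -> R) : R :=
  \sum_(t : K.-tuple ('I_n * bool)) path_prob t * F t.

End Defs.

From HB Require Import structures.
From mathcomp Require Import all_boot all_order all_algebra.
From mathcomp Require Import all_classical all_reals all_analysis.
From mathcomp Require Import ring lra.
Set Implicit Arguments.
Unset Strict Implicit.
Unset Printing Implicit Defensive.
Import Order.TTheory GRing.Theory Num.Theory.
Import numFieldNormedType.Exports.
Local Open Scope ring_scope.

(* For a single sample i, the convexity inequality of f_i at x* (weight tau) and
   its co-coercivity inequality between x~ and the extrapolated point y (weight
   1 - tau) combine, once the z-update is expanded, into the per-step bound up to
   an error term <g_i(x~) - grad f(x~), w> with w independent of i; averaging over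
   the uniform index kills it.  The coin flip sets x~_{k+1} = y with probability
   p, which produces the p-dependent coefficients.  The total expectation is
   then handled by conditioning on the first k draws. *)

Section InnerProduct.
Variables (R : realType) (d : nat).
Notation vec := 'rV[R]_d.
Implicit Types (u v w : vec) (a : R).

Lemma dotvC u v : dotv u v = dotv v u.
Proof. by apply: eq_bigr => i _; rewrite mulrC. Qed.

Lemma dotvDl u v w : dotv (u + v) w = dotv u w + dotv v w.
Proof. by rewrite /dotv -big_split; apply: eq_bigr => i _; rewrite mxE mulrDl. Qed.

Lemma dotvZl a u w : dotv (a *: u) w = a * dotv u w.
Proof. by rewrite /dotv mulr_sumr; apply: eq_bigr => i _; rewrite mxE mulrA. Qed.

Lemma dotvNl u w : dotv (- u) w = - dotv u w.
Proof. by rewrite -scaleN1r dotvZl mulN1r. Qed.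

Lemma dotvBl u v w : dotv (u - v) w = dotv u w - dotv v w.
Proof. by rewrite dotvDl dotvNl. Qed.

Lemma dotv0l w : dotv 0 w = 0.
Proof. by rewrite -(scale0r (0 : vec)) dotvZl mul0r. Qed.

Lemma dotvDr u v w : dotv w (u + v) = dotv w u + dotv w v.
Proof. by rewrite dotvC dotvDl !(dotvC w). Qed.

Lemma dotvZr a u w : dotv w (a *: u) = a * dotv w u.
Proof. by rewrite dotvC dotvZl dotvC. Qed.

Lemma dotvNr u w : dotv w (- u) = - dotv w u.
Proof. by rewrite !(dotvC w) dotvNl. Qed.

Lemma dotvBr u v w : dotv w (u - v) = dotv w u - dotv w v.
Proof. by rewrite !(dotvC w) dotvBl. Qed.

Lemma dotv_suml (I : finType) (F : I -> vec) w :
  dotv (\sum_i F i) w = \sum_i dotv (F i) w.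
Proof. exact: (big_morph (fun u => dotv u w) (fun u v => dotvDl u v w) (dotv0l w)). Qed.

Lemma sqnorm_ge0 v : 0 <= sqnorm v.
Proof. by apply: sumr_ge0 => i _; rewrite -expr2 sqr_ge0. Qed.

Lemma sqr_enorm v : enorm v ^+ 2 = sqnorm v.
Proof. by rewrite sqr_sqrtr // sqnorm_ge0. Qed.

Lemma sqnormD u v : sqnorm (u + v) = sqnorm u + 2 * dotv u v + sqnorm v.
Proof. by rewrite /sqnorm dotvDl !dotvDr (dotvC v u); ring. Qed.

Lemma sqnormB u v : sqnorm (u - v) = sqnorm u - 2 * dotv v u + sqnorm v.
Proof. by rewrite /sqnorm dotvBl !dotvBr (dotvC u v); ring. Qed.

Lemma sqnormZ a v : sqnorm (a *: v) = a ^+ 2 * sqnorm v.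
Proof. by rewrite /sqnorm dotvZl dotvZr mulrA. Qed.

Lemma sqnormN v : sqnorm (- v) = sqnorm v.
Proof. by rewrite /sqnorm dotvNl dotvC dotvNl opprK. Qed.

Lemma dotv_le u v (c : R) : 0 < c -> sqnorm u <= c ^+ 2 * sqnorm v ->
  dotv u v <= c * sqnorm v.
Proof.
move=> c_gt0 uv; have := sqnorm_ge0 (u - c *: v).
rewrite sqnormB sqnormZ dotvZl (dotvC v u) => h.
by rewrite -(ler_pM2l c_gt0); nra.
Qed.

End InnerProduct.

Section SmoothConvex.
Variables (R : realType) (d : nat) (L : R).
Variables (h : 'rV[R]_d -> R) (gh : 'rV[R]_d -> 'rV[R]_d).
Notation vec := 'rV[R]_d.
Hypotheses (L_gt0 : 0 < L) (h_grad : is_gradient h gh).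
Hypotheses (h_convex : convex_fun h) (h_smooth : L_smooth_grad L gh).

Lemma is_derive_line (x v : vec) (t : R) :
  is_derive t 1 (fun s : R => h (x + s *: v)) (dotv (gh (x + t *: v)) v).
Proof.
have [dh dhE] := h_grad (x + t *: v).
have quot : (fun s : R => s^-1 *: (((fun s => h (x + s *: v)) \o shift t) (s *: 1)
                                   - h (x + t *: v)))
          = (fun s => s^-1 *: ((h \o shift (x + t *: v)) (s *: v) - h (x + t *: v))).
  apply/funext => s /=; congr (_ *: (h _ - _)).
  by rewrite [s%:A]mulr1 scalerDl addrCA addrC.
split; first by rewrite /derivable quot; exact: diff_derivable.
by rewrite /derive quot -/(derive _ _ _) deriveE // dhE.
Qed.

Lemma L_smooth_sqnorm (x y : vec) : sqnorm (gh x - gh y) <= L ^+ 2 * sqnorm (x - y).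
Proof.
rewrite -!sqr_enorm -exprMn; apply: lerXn2r; rewrite ?nnegrE ?sqrtr_ge0 //.
by rewrite mulr_ge0 ?sqrtr_ge0 ?ltW.
Qed.

Lemma L_smooth_dotv (x y : vec) : dotv (gh y - gh x) (y - x) <= L * sqnorm (y - x).
Proof. exact: dotv_le L_gt0 (L_smooth_sqnorm y x). Qed.

Lemma descent_lemma (x v : vec) : h (x + v) <= h x + dotv (gh x) v + L / 2 * sqnorm v.
Proof.
set c := dotv (gh x) v; set e := L / 2 * sqnorm v.
pose psi := (fun s : R => h (x + s *: v)) - c \*: @id R - e \*: (@id R * @id R).
have id_deriv (s : R) : is_derive s 1 (@id R) 1 := is_derive_id s 1.
have psi_deriv (s : R) := is_deriveB (is_deriveB (is_derive_line x v s)
  (is_deriveZ c (id_deriv s))) (is_deriveZ e (is_deriveM (id_deriv s) (id_deriv s))).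
have psi_cont : {within `[0, 1], continuous psi}%classic.
  apply: continuous_subspaceT => s; apply: differentiable_continuous.
  by rewrite -derivable1_diffP; exact: ex_derive.
have psi_slope (s : R) : s \in `]0, 1[ -> derive1 psi s <= 0.
  rewrite in_itv /= => /andP[s_gt0 _].
  rewrite derive1E derive_val /= ![_%:A]mulr1.
  have := L_smooth_dotv x (x + s *: v).
  rewrite addrAC subrr add0r sqnormZ dotvZr dotvBl -/c => hs.
  have {}hs : dotv (gh (x + s *: v)) v - c <= L * s * sqnorm v.
    by rewrite -(ler_pM2l s_gt0); nra.
  have -> : e *: (s + s) = L * s * sqnorm v.
    by change (L / 2 * sqnorm v * (s + s) = L * s * sqnorm v); field.
  lra.
have psi_nincr : psi 1 <= psi 0.
  by apply: (ler0_derive1_le_cc _ psi_slope psi_cont); rewrite ?in_itv /= ?ler01 ?lexx.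
move: psi_nincr; rewrite /psi !fctE /= scale1r scale0r addr0 ![_%:A]mulr1.
by rewrite !(mulr0, mulr1, scaler0, subr0) [e%:A]mulr1; lra.
Qed.

Lemma convex_gradient_ineq (x y : vec) : h y + dotv (gh y) (x - y) <= h x.
Proof.
have hy' := is_derive_line y (x - y) 0; rewrite scale0r addr0 in hy'.
have := @ex_derive _ _ _ _ _ _ _ hy'.
rewrite /derivable -(@derive_val _ _ _ _ _ _ _ hy') /derive.
move=> /cvg_dnbhs_at_right slope; rewrite -lerBrDl.
apply: (cvgr_to_le slope); near=> s.
have s_gt0 : 0 < s by near: s; exact: nbhs_right_gt.
have s_le1 : s <= 1 by near: s; exact: nbhs_right_le.
have := @h_convex x y s; rewrite ltW //= s_le1 => /(_ isT).
rewrite /= addr0 scale0r addr0 [s%:A]mulr1 ler_pdivrMl //.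
have -> : y + s *: (x - y) = s *: x + (1 - s) *: y.
  by rewrite scalerBr scalerBl scale1r addrCA.
lra.
Unshelve. all: by end_near.
Qed.

Lemma cocoercive_ineq (x y : vec) :
  h y + dotv (gh y) (x - y) + L^-1 / 2 * sqnorm (gh x - gh y) <= h x.
Proof.
set D := gh x - gh y; set u := x - L^-1 *: D.
have cvx := convex_gradient_ineq u y.
have desc := descent_lemma x (- (L^-1 *: D)).
have uy : u - y = (x - y) - L^-1 *: D by rewrite /u addrAC.
rewrite uy dotvBr dotvZr in cvx.
rewrite -/u dotvNr dotvZr sqnormN sqnormZ in desc.
have gxD : dotv (gh x) D = dotv (gh y) D + sqnorm D by rewrite /sqnorm dotvBl; ring.
rewrite gxD in desc.
have -> : L^-1 / 2 * sqnorm D = L^-1 * sqnorm D - L / 2 * (L^-1 ^+ 2 * sqnorm D).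
  by field; rewrite gt_eqF.
lra.
Qed.

Lemma acc_sample_ineq (t : R) (z xt gt xs : vec) :
  let y := t *: z + (1 - t) *: (xt - L^-1 *: gt) in
  let alpha := L * t / (1 - t) in
  0 < t < 1 ->
  (1 - t) / t ^+ 2 * (h y - h xs - (1 - t) * (h xt - h xs))
  + L / 2 * sqnorm (z - alpha^-1 *: (gh y - gh xt + gt) - xs)
  + (1 - t) ^+ 2 / (2 * L * t ^+ 2) * sqnorm gt
  <= L / 2 * sqnorm (z - xs)
     + dotv (gh xt - gt) ((1 - t) / t *: (z - xs) - (1 - t) ^+ 2 / (L * t ^+ 2) *: gt).
Proof.
move=> y alpha /andP[t_gt0 t_lt1].
have t1_gt0 : 0 < 1 - t by rewrite subr_gt0.
have cvx := ler_wpM2l (ltW t_gt0) (convex_gradient_ineq xs y).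
have coc := ler_wpM2l (ltW t1_gt0) (cocoercive_ineq xt y).
set a := gh y in cvx coc *; set b := gh xt in coc *; set u := z - xs.
have comb : h y - h xs - (1 - t) * (h xt - h xs)
    <= t * dotv a u - (1 - t) / L * dotv a gt - (1 - t) / (2 * L) * sqnorm (b - a).
  have Ey : t *: (xs - y) + (1 - t) *: (xt - y) = (1 - t) / L *: gt - t *: u.
    by apply/rowP => j; rewrite !mxE; ring.
  have Ea : t * dotv a (xs - y) + (1 - t) * dotv a (xt - y)
      = (1 - t) / L * dotv a gt - t * dotv a u.
    by rewrite -!dotvZr -dotvDr Ey dotvBr !dotvZr.
  have -> : (1 - t) / (2 * L) = (1 - t) * (L^-1 / 2) by field; rewrite gt_eqF.
  (* The copies of these atoms in [cvx], [coc] and [Ea] differ in their canonical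
     instances; [set] identifies them up to conversion, as [lra] needs. *)
  set A1 := dotv a (xs - y) in cvx Ea *; set A2 := dotv a (xt - y) in coc Ea *.
  lra.
rewrite (addrAC z) -/u sqnormB sqnormZ dotvZl -[a - b]opprB sqnormD sqnormN.
clearbody a b u. (* so that the rewrites below cannot unfold [u] *)
rewrite !(dotvDl, dotvNl, dotvBl, dotvBr, dotvZr) -/(sqnorm gt).
(* The slack of the goal is exactly (1 - t) / t^2 times the slack of [comb]. *)
rewrite -subr_ge0 in comb; set slack := _ - _ in comb.
rewrite -subr_ge0 (_ : _ - _ = (1 - t) / t ^+ 2 * slack).
  by rewrite mulr_ge0 // divr_ge0 ?exprn_ge0 ?ltW.
by rewrite /slack /alpha; field; rewrite !gt_eqF.
Qed.

End SmoothConvex.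

Section Sampling.
Variables (R : realType) (d n : nat) (L : R) (tau p : nat -> R).
Variable g : 'I_n -> 'rV[R]_d -> 'rV[R]_d.
Hypotheses (n_gt0 : (0 < n)%N) (p01 : forall j, 0 <= p j <= 1).
Notation vec := 'rV[R]_d.
Notation C := ('I_n * bool)%type.

Definition draw_weight (k : nat) (c : C) : R :=
  n%:R^-1 * (if c.2 then p k else 1 - p k).

Definition Edraw (k : nat) (X : C -> R) : R := \sum_c draw_weight k c * X c.

Lemma eq_Edraw k (X Y : C -> R) : X =1 Y -> Edraw k X = Edraw k Y.
Proof. by move=> XY; apply: eq_bigr => c _; rewrite XY. Qed.

Lemma Edraw_pair k X :
  Edraw k X = n%:R^-1 * \sum_(i < n) (p k * X (i, true) + (1 - p k) * X (i, false)).
Proof.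
transitivity (\sum_(i < n) \sum_(b : bool) draw_weight k (i, b) * X (i, b)).
  by rewrite pair_big /=; apply: eq_bigr => -[i b].
by rewrite mulr_sumr; apply: eq_bigr => i _; rewrite big_bool /draw_weight /=; ring.
Qed.

Lemma invn_mulrn (x : R) : n%:R^-1 * (x *+ n) = x.
Proof. by rewrite -[x *+ n]mulr_natl mulKf // pnatr_eq0 -lt0n. Qed.

Lemma Edraw_const k a : Edraw k (fun=> a) = a.
Proof. by rewrite Edraw_pair sumr_const card_ord invn_mulrn; ring. Qed.

Lemma sum_dotv_centered (x w : vec) : \sum_(i < n) dotv (g i x - fullgrad g x) w = 0.
Proof.
under eq_bigr => i _ do rewrite dotvBl.
by rewrite sumrB -dotv_suml sumr_const card_ord dotvZl -mulrnAr invn_mulrn subrr.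
Qed.

Lemma acc_run_rcons k (cs : seq C) c s :
  acc_run L tau g k (rcons cs c) s
  = acc_step L tau g (k + size cs) (acc_run L tau g k cs s) c.
Proof.
by elim: cs k s => [|c' cs IH] k s /=; rewrite ?addn0 // IH addSnnS.
Qed.

Lemma acc_state_rcons x0 k (t : k.-tuple C) c :
  acc_state L tau g x0 k.+1 [tuple of rcons t c]
  = acc_step L tau g k (acc_state L tau g x0 k t) c.
Proof.
rewrite /acc_state /= !take_oversize ?size_rcons ?size_tuple //.
by rewrite acc_run_rcons size_tuple.
Qed.

Lemma acc_state_rcons_prefix x0 k (t : k.-tuple C) c :
  acc_state L tau g x0 k [tuple of rcons t c] = acc_state L tau g x0 k t.
Proof.
by rewrite /acc_state /= -cats1 take_size_cat ?size_tuple // take_oversize ?size_tuple.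
Qed.

Lemma path_prob_rcons k (t : k.-tuple C) c :
  path_prob p [tuple of rcons t c] = path_prob p t * draw_weight k c.
Proof.
rewrite /path_prob big_ord_recr /= (tnth_nth c) /= nth_rcons size_tuple ltnn eqxx.
congr (_ * _); apply: eq_bigr => j _.
by rewrite !(tnth_nth c) /= nth_rcons size_tuple ltn_ord.
Qed.

Lemma path_prob_ge0 k (t : k.-tuple C) : 0 <= path_prob p t.
Proof.
apply: prodr_ge0 => j _; rewrite mulr_ge0 ?invr_ge0 ?ler0n //.
by have /andP[? ?] := p01 j; case: ifP; rewrite ?subr_ge0.
Qed.

Lemma Expect_rcons k (F : k.+1.-tuple C -> R) :
  Expect p F
  = \sum_(t : k.-tuple C) path_prob p t * Edraw k (fun c => F [tuple of rcons t c]).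
Proof.
rewrite /Expect; under [RHS]eq_bigr => t _ do rewrite /Edraw mulr_sumr.
rewrite pair_big /= (reindex (fun tc : k.-tuple C * C => [tuple of rcons tc.1 tc.2])) /=.
  by apply: eq_bigr => -[t c] _ /=; rewrite path_prob_rcons mulrA.
exists (fun t : k.+1.-tuple C =>
          ([tuple of belast (thead t) (behead t)], last (thead t) (behead t))).
  move=> [t c] _; set u := [tuple of rcons t c].
  have E : rcons (belast (thead u) (behead u)) (last (thead u) (behead u)) = rcons t c.
    by rewrite -lastI; move: (congr1 val (tuple_eta u)) => /= <-.
  by case: (rcons_inj E) => E1 ->; congr (_, _); apply: val_inj.
move=> t _; apply: val_inj => /=.
by rewrite -lastI; move: (congr1 val (tuple_eta t)) => /= <-.
Qed.

Lemma ExpectD K (F G : K.-tuple C -> R) :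
  Expect p (fun t => F t + G t) = Expect p F + Expect p G.
Proof. by rewrite /Expect -big_split; apply: eq_bigr => t _; rewrite mulrDr. Qed.

Lemma ExpectZ K a (F : K.-tuple C -> R) :
  Expect p (fun t => a * F t) = a * Expect p F.
Proof. by rewrite /Expect mulr_sumr; apply: eq_bigr => t _; rewrite mulrCA. Qed.

Lemma Expect_le_markov x0 k (Phi : vec * vec -> vec * vec -> R) (Psi : vec * vec -> R) :
  (forall s, Edraw k (fun c => Phi s (acc_step L tau g k s c)) <= Psi s) ->
  Expect p (fun t : k.+1.-tuple C =>
              Phi (acc_state L tau g x0 k t) (acc_state L tau g x0 k.+1 t))
  <= Expect p (fun t : k.+1.-tuple C => Psi (acc_state L tau g x0 k t)).
Proof.
move=> step; rewrite !Expect_rcons; apply: ler_sum => t _.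
apply: ler_wpM2l; first exact: path_prob_ge0.
under eq_Edraw => c do rewrite acc_state_rcons acc_state_rcons_prefix.
under [X in _ <= X]eq_Edraw => c do rewrite acc_state_rcons_prefix.
by rewrite Edraw_const.
Qed.

End Sampling.

Section AccSVRG.
Variables (R : realType) (d n : nat) (L : R) (tau p : nat -> R).
Variables (fi : 'I_n -> 'rV[R]_d -> R) (g : 'I_n -> 'rV[R]_d -> 'rV[R]_d).
Variables (f : 'rV[R]_d -> R) (xs : 'rV[R]_d).
Notation vec := 'rV[R]_d.
Hypotheses (n_gt0 : (0 < n)%N) (L_gt0 : 0 < L).
Hypotheses (fi_convex : forall i, convex_fun (fi i)).
Hypotheses (fi_grad : forall i, is_gradient (fi i) (g i)).
Hypotheses (fi_smooth : forall i, L_smooth_grad L (g i)).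
Hypothesis f_mean : forall x, f x = n%:R^-1 * \sum_(i < n) fi i x.

Lemma acc_mean_ineq (t : R) (xt z : vec) :
  let gt := fullgrad g xt in
  let y := t *: z + (1 - t) *: (xt - L^-1 *: gt) in
  let alpha := L * t / (1 - t) in
  0 < t < 1 ->
  (1 - t) / t ^+ 2 * (f y - f xs - (1 - t) * (f xt - f xs))
  + L / 2 * (n%:R^-1 * \sum_(i < n) sqnorm (z - alpha^-1 *: (g i y - g i xt + gt) - xs))
  + (1 - t) ^+ 2 / (2 * L * t ^+ 2) * sqnorm gt
  <= L / 2 * sqnorm (z - xs).
Proof.
move=> gt y alpha t01.
have := @ler_sum _ _ (index_enum 'I_n) xpredT _ _ (fun i _ =>
  acc_sample_ineq L_gt0 (fi_grad i) (fi_convex i) (fi_smooth i) z xt gt xs t01).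
rewrite !big_split /= -!mulr_sumr sum_dotv_centered // addr0 !sumr_const card_ord.
have -> : \sum_(i < n) (fi i y - fi i xs - (1 - t) * (fi i xt - fi i xs))
          = (f y - f xs - (1 - t) * (f xt - f xs)) *+ n.
  rewrite !f_mean -[_ *+ n]mulr_natl !sumrB -mulr_sumr sumrB.
  by field; rewrite pnatr_eq0 -lt0n.
set N := \sum_(i < n) _ => sum_ineq.
have N_mean : N = n%:R^-1 * N *+ n by rewrite -mulrnAr (invn_mulrn n_gt0).
by rewrite N_mean !mulrnAr -!mulrnDl ler_pMn2r in sum_ineq.
Qed.

Definition potential k (s : vec * vec) : R :=
  (1 - tau k * p k) * (1 - tau k) / (tau k ^+ 2 * p k) * (f s.1 - f xs)
  + L / 2 * sqnorm (s.2 - xs).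

Definition potential_next k (s s' : vec * vec) : R :=
  (1 - tau k) / (tau k ^+ 2 * p k) * (f s'.1 - f xs) + L / 2 * sqnorm (s'.2 - xs)
  + (1 - tau k) ^+ 2 / (2 * L * tau k ^+ 2) * sqnorm (fullgrad g s.1).

Lemma acc_step_bound k (s : vec * vec) : 0 < tau k < 1 -> 0 < p k <= 1 ->
  Edraw p k (fun c => potential_next k s (acc_step L tau g k s c)) <= potential k s.
Proof.
case: s => xt z t01 /andP[p_gt0 p_le1].
have mean := acc_mean_ineq xt z t01.
rewrite Edraw_pair /potential_next /potential /acc_step /=.
set t := tau k in t01 mean *; set q := p k in p_gt0 p_le1 *.
set y := t *: z + _ in mean *.
have [t_gt0 t_lt1] := andP t01.
have split_coin (A B X K : R) :
  q * (A + X + K) + (1 - q) * (B + X + K) = q * A + (1 - q) * B + K + X by ring.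
rewrite (eq_bigr _ (fun i _ => split_coin _ _ _ _)) big_split /= sumr_const card_ord.
have coin_mean : q * ((1 - t) / (t ^+ 2 * q) * (f y - f xs))
                 + (1 - q) * ((1 - t) / (t ^+ 2 * q) * (f xt - f xs))
  = (1 - t) / t ^+ 2 * (f y - f xs - (1 - t) * (f xt - f xs))
    + (1 - t * q) * (1 - t) / (t ^+ 2 * q) * (f xt - f xs).
  by field; rewrite !gt_eqF.
rewrite coin_mean -mulr_sumr mulrDr (invn_mulrn n_gt0).
set S := \sum_(i < n) _ in mean *; lra.
Qed.

End AccSVRG.

Theorem proposition2 (R : realType) (d n : nat) (L : R)
  (fi : 'I_n -> 'rV[R]_d -> R) (g : 'I_n -> 'rV[R]_d -> 'rV[R]_d)
  (tau p : nat -> R) (x0 xstar : 'rV[R]_d) :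
  (0 < n)%N -> 0 < L ->
  (forall i, convex_fun (fi i)) ->
  (forall i, is_gradient (fi i) (g i)) ->
  (forall i, L_smooth_grad L (g i)) ->
  (forall j, 0 < tau j < 1) ->
  (forall j, 0 < p j <= 1) ->
  let f := fun x => n%:R^-1 * \sum_(i < n) fi i x in
  (forall x, f xstar <= f x) ->
  forall k : nat,
  let E := @Expect R n p k.+1 in
  let xt := fun j t => (acc_state L tau g x0 j t).1 in
  let z := fun j t => (acc_state L tau g x0 j t).2 in
  (1 - tau k) / (tau k ^+ 2 * p k) * E (fun t => f (xt k.+1 t) - f xstar)
  + L / 2 * E (fun t => sqnorm (z k.+1 t - xstar))
  + (1 - tau k) ^+ 2 / (2 * L * tau k ^+ 2) * E (fun t => sqnorm (fullgrad g (xt k t)))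
  <= (1 - tau k * p k) * (1 - tau k) / (tau k ^+ 2 * p k) * E (fun t => f (xt k t) - f xstar)
  + L / 2 * E (fun t => sqnorm (z k t - xstar)).
Proof.
(* The bound holds for every reference point: the minimality of [xstar] is unused. *)
move=> n_gt0 L_gt0 fi_convex fi_grad fi_smooth tau01 p01 f _ k; cbv zeta.
have p_prob j : 0 <= p j <= 1 by have /andP[/ltW -> ->] := p01 j.
rewrite -!ExpectZ -!ExpectD.
apply: (Expect_le_markov n_gt0 p_prob x0
  (Phi := potential_next L tau p g f xstar k) (Psi := potential L tau p f xstar k)).
move=> s; exact: (acc_step_bound xstar n_gt0 L_gt0 fi_convex fi_grad fi_smooth
  (fun x => erefl) s (tau01 k) (p01 k)).
Qed.
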